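(* Let $s_0\le s_1\le\cdots\le s_t$ be positive numbers and define $a_k=\sum_{i=0}^k\frac{s_i}{s_k}$ for $k\le t$. Then \[ s_ta_t^2\le 2\sum_{k=0}^ts_ka_k. \] *)

From mathcomp Require Import all_boot all_order all_algebra.
Set Implicit Arguments. Unset Strict Implicit. Unset Printing Implicit Defensive.
Import Order.TTheory GRing.Theory Num.Theory.
Local Open Scope ring_scope.

Definition acoef (R : realFieldType) (s : nat -> R) (k : nat) : R :=
  \sum_(0 <= i < k.+1) s i / s k.

From mathcomp Require Import all_boot all_order all_algebra.
From mathcomp Require Import ring lra.

Set Implicit Arguments.
Unset Strict Implicit.
Import Order.TTheory GRing.Theory Num.Theory.
Local Open Scope ring_scope.

(* With S_k = s_0 + ... + s_k we have s_k a_k = S_k, so the claim reads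
   S_t^2 / s_t <= 2 (S_0 + ... + S_t).  This goes by induction on t:
   S_{t+1}^2 / s_{t+1} = S_t^2 / s_{t+1} + 2 S_t + s_{t+1}, and s_t <= s_{t+1}
   bounds the first term by S_t^2 / s_t. *)

Section PartialSums.

Variables (R : realFieldType) (s : nat -> R).

Let S k := \sum_(0 <= i < k.+1) s i.

Lemma psum_ge0 t : (forall k, (k <= t)%N -> 0 < s k) -> 0 <= S t.
Proof.
move=> hpos; rewrite /S big_nat_cond; apply: sumr_ge0 => i /andP[/andP[_ hi] _].
exact/ltW/hpos.
Qed.

Lemma mul_acoef k : 0 < s k -> s k * acoef s k = S k.
Proof. by move=> hk; rewrite /acoef -mulr_suml mulrCA divff ?mulr1 ?gt_eqF. Qed.

Lemma sqr_psum_div_le t :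
  (forall k, (k <= t)%N -> 0 < s k) -> (forall k, (k < t)%N -> s k <= s k.+1) ->
  S t ^+ 2 / s t <= 2 * \sum_(0 <= k < t.+1) S k.
Proof.
elim: t => [|t IH] hpos hmono.
  have s0_gt0 := hpos 0%N isT.
  rewrite /S !big_nat1 expr2 -mulrA divff ?mulr1 ?gt_eqF //; lra.
have IHt := IH (fun k hk => hpos k (leqW hk)) (fun k hk => hmono k (leqW hk)).
have St_ge0 : 0 <= S t by apply: psum_ge0 => k hk; exact/hpos/leqW.
have st_gt0 : 0 < s t by exact/hpos/leqW.
have st1_gt0 : 0 < s t.+1 by exact: hpos.
have S_succ : S t.+1 = S t + s t.+1 by rewrite /S big_nat_recr.
have expand : S t.+1 ^+ 2 / s t.+1 = S t ^+ 2 / s t.+1 + 2 * S t + s t.+1.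
  by rewrite S_succ; field; rewrite gt_eqF.
have shrink : S t ^+ 2 / s t.+1 <= S t ^+ 2 / s t.
  by rewrite ler_wpM2l ?sqr_ge0 // lef_pV2 ?posrE // hmono.
rewrite expand big_nat_recr //= S_succ; lra.
Qed.

End PartialSums.

Theorem lemma25 (R : realFieldType) (t : nat) (s : nat -> R)
  (hpos : forall k, (k <= t)%N -> 0 < s k)
  (hmono : forall k, (k < t)%N -> s k <= s k.+1) :
  s t * (acoef s t) ^+ 2 <= 2 * \sum_(0 <= k < t.+1) s k * acoef s k.
Proof.
have st_gt0 : 0 < s t by exact: hpos.
have -> : s t * acoef s t ^+ 2 = (s t * acoef s t) ^+ 2 / s t.
  by field; rewrite gt_eqF.
rewrite (mul_acoef st_gt0).
under [in X in _ <= 2 * X]eq_big_nat => k /andP[_ hk] do rewrite (mul_acoef (hpos k hk)).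
exact: sqr_psum_div_le.
Qed.
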